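(* Let $A\in SL_2\mathcal{V}$. (1) If $A\in\mathcal{P}$ and $A\kappa=\kappa x$ for some $\kappa\in S\mathbb{H}$ and $x\in\mathbb{H}$, then $x=1$. (2) $A\in\mathcal{P}$ if and only if $A$ is not the identity and there exists $\kappa\in S\mathbb{H}$ with $A\kappa=\kappa$.
   Context: For $q=a+bi+cj+dk\in\mathbb{H}$, $q^*=a+bi+cj-dk$, $\bar q=a-bi-cj-dk$. $\mathcal{V}=\mathrm{span}_\mathbb{R}\{1,i,j\}$. $S\mathbb{H}=\{(\xi,\eta)\in\mathbb{H}^2\setminus\{(0,0)\}:\xi\bar\eta\in\mathcal{V}\}$, with right multiplication $(\xi,\eta)x=(\xi x,\eta x)$; matrices act on columns by multiplication. $SL_2\mathcal{V}$ is the group of quaternionic matrices $\begin{pmatrix}a&b\\c&d\end{pmatrix}$ with $ab^*,cd^*,c^*a,d^*b,ba^*,dc^*,a^*c,b^*d\in\mathcal{V}$ and $ad^*-bc^*=da^*-cb^*=d^*a-b^*c=a^*d-c^*b=1$. $\mathcal{P}$ is the set of parabolic translations: $A\in SL_2\mathcal{V}$ with $A\neq1$ and $(A-1)^2=0$ (equivalently, $A$ conjugate in $SL_2\mathcal{V}$ to $\begin{pmatrix}1&1\\0&1\end{pmatrix}$). *)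

From HB Require Import structures.
From mathcomp Require Import all_boot all_order all_algebra.
From mathcomp Require Import reals.
Set Implicit Arguments. Unset Strict Implicit. Unset Printing Implicit Defensive.
Import Order.TTheory GRing.Theory Num.Theory.
Local Open Scope ring_scope.

Section Quat.
Variable R : realType.

(* q = a + b i + c j + d k *)
Record quat := Quat { q0 : R; q1 : R; q2 : R; q3 : R }.

Definition qzero : quat := Quat 0 0 0 0.
Definition qone : quat := Quat 1 0 0 0.
Definition qadd (p q : quat) : quat :=
  Quat (q0 p + q0 q) (q1 p + q1 q) (q2 p + q2 q) (q3 p + q3 q).
Definition qopp (p : quat) : quat := Quat (- q0 p) (- q1 p) (- q2 p) (- q3 p).
Definition qsub (p q : quat) : quat := qadd p (qopp q).
(* Hamilton product: i^2 = j^2 = k^2 = ijk = -1 *)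
Definition qmul (p q : quat) : quat :=
  Quat (q0 p * q0 q - q1 p * q1 q - q2 p * q2 q - q3 p * q3 q)
       (q0 p * q1 q + q1 p * q0 q + q2 p * q3 q - q3 p * q2 q)
       (q0 p * q2 q - q1 p * q3 q + q2 p * q0 q + q3 p * q1 q)
       (q0 p * q3 q + q1 p * q2 q - q2 p * q1 q + q3 p * q0 q).
Definition qbar (p : quat) : quat := Quat (q0 p) (- q1 p) (- q2 p) (- q3 p).
Definition qstar (p : quat) : quat := Quat (q0 p) (q1 p) (q2 p) (- q3 p).

(* membership in V = span_R {1, i, j} *)
Definition inV (p : quat) : Prop := q3 p = 0.

Definition SH (k : quat * quat) : Prop :=
  k <> (qzero, qzero) /\ inV (qmul k.1 (qbar k.2)).

Definition rmulp (k : quat * quat) (x : quat) : quat * quat :=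
  (qmul k.1 x, qmul k.2 x).

Record qmat := QMat { ma : quat; mb : quat; mc : quat; md : quat }.

Definition qmat1 : qmat := QMat qone qzero qzero qone.
Definition qmat0 : qmat := QMat qzero qzero qzero qzero.
Definition qmsub (A B : qmat) : qmat :=
  QMat (qsub (ma A) (ma B)) (qsub (mb A) (mb B))
       (qsub (mc A) (mc B)) (qsub (md A) (md B)).
Definition qmmul (A B : qmat) : qmat :=
  QMat (qadd (qmul (ma A) (ma B)) (qmul (mb A) (mc B)))
       (qadd (qmul (ma A) (mb B)) (qmul (mb A) (md B)))
       (qadd (qmul (mc A) (ma B)) (qmul (md A) (mc B)))
       (qadd (qmul (mc A) (mb B)) (qmul (md A) (md B))).

Definition qmact (A : qmat) (k : quat * quat) : quat * quat :=
  (qadd (qmul (ma A) k.1) (qmul (mb A) k.2),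
   qadd (qmul (mc A) k.1) (qmul (md A) k.2)).

Definition SL2V (A : qmat) : Prop :=
  let a := ma A in let b := mb A in let c := mc A in let d := md A in
  [/\ inV (qmul a (qstar b)), inV (qmul c (qstar d)),
      inV (qmul (qstar c) a), inV (qmul (qstar d) b) &
   [/\ inV (qmul b (qstar a)), inV (qmul d (qstar c)),
       inV (qmul (qstar a) c), inV (qmul (qstar b) d) &
   [/\ qsub (qmul a (qstar d)) (qmul b (qstar c)) = qone,
       qsub (qmul d (qstar a)) (qmul c (qstar b)) = qone,
       qsub (qmul (qstar d) a) (qmul (qstar b) c) = qone &
       qsub (qmul (qstar a) d) (qmul (qstar c) b) = qone]]].

Definition parabolic (A : qmat) : Prop :=
  SL2V A /\ A <> qmat1 /\
  qmmul (qmsub A qmat1) (qmsub A qmat1) = qmat0.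

End Quat.

From HB Require Import structures.
From mathcomp Require Import all_boot all_order all_algebra.
From mathcomp Require Import reals.
From mathcomp Require Import ring lra.
Set Implicit Arguments. Unset Strict Implicit. Unset Printing Implicit Defensive.
Import Order.TTheory GRing.Theory Num.Theory.
Local Open Scope ring_scope.

(* Right multiplication commutes with the action of matrices, so if A k = k x then
   N := A - 1 satisfies N (N k) = k (x - 1)^2; as N^2 = 0 and H has no zero divisors,
   x = 1.  Conversely, when N^2 = 0 any nonzero column of N is killed by N; the
   SL_2 V relations force c to lie in V, which puts the first column (a - 1, c) in S H
   (if it vanishes, (1, 0) itself is fixed).  A fixed k in S H rescales on the right to
   (1, 0) or to (p, 1) with p in V; the fixed-point equations and d^* a - b^* c = 1 then
   give A - 1 = (p, 1)^T c (1, -p), whose square vanishes because (1, -p)(p, 1)^T = 0. *)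

Lemma quatP (R : realType) (p q : quat R) :
  q0 p = q0 q -> q1 p = q1 q -> q2 p = q2 q -> q3 p = q3 q -> p = q.
Proof. by case: p; case: q => /= ? ? ? ? ? ? ? ? -> -> -> ->. Qed.

Lemma qmatP (R : realType) (A B : qmat R) :
  ma A = ma B -> mb A = mb B -> mc A = mc B -> md A = md B -> A = B.
Proof. by case: A; case: B => /= ? ? ? ? ? ? ? ? -> -> -> ->. Qed.

Ltac qring := apply: quatP; simpl; ring.

Section Quaternions.
Variable R : realType.
Implicit Types p q w : quat R.

Definition qnorm q : R := q0 q ^+ 2 + q1 q ^+ 2 + q2 q ^+ 2 + q3 q ^+ 2.

Definition qscale (r : R) q : quat R :=
  Quat (r * q0 q) (r * q1 q) (r * q2 q) (r * q3 q).

Definition qinv q : quat R := qscale (qnorm q)^-1 (qbar q).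

Lemma qmulA p q w : qmul (qmul p q) w = qmul p (qmul q w).
Proof. qring. Qed.

Lemma qmulq1 q : qmul q (qone R) = q.
Proof. qring. Qed.

Lemma qmul1q q : qmul (qone R) q = q.
Proof. qring. Qed.

Lemma qnorm0 : qnorm (qzero R) = 0.
Proof. rewrite /qnorm /=; ring. Qed.

Lemma qnorm_mul p q : qnorm (qmul p q) = qnorm p * qnorm q.
Proof. rewrite /qnorm /=; ring. Qed.

Lemma qnorm_eq0 q : qnorm q = 0 -> q = qzero R.
Proof.
rewrite /qnorm => nq.
have := sqr_ge0 (q0 q); have := sqr_ge0 (q1 q).
have := sqr_ge0 (q2 q); have := sqr_ge0 (q3 q).
by move=> ? ? ? ?; apply: quatP => /=; apply/eqP; rewrite -sqrf_eq0; apply/eqP; lra.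
Qed.

Lemma qnorm_eq0P q : reflect (q = qzero R) (qnorm q == 0).
Proof. by apply: (iffP eqP) => [/qnorm_eq0 | ->]; last exact: qnorm0. Qed.

Lemma qone_neq0 : qone R <> qzero R.
Proof. by move/(congr1 (@q0 R))/eqP; rewrite oner_eq0. Qed.

Lemma qmul_eq0 p q : qmul p q = qzero R -> p = qzero R \/ q = qzero R.
Proof.
move/(congr1 qnorm); rewrite qnorm_mul qnorm0 => /eqP.
by rewrite mulf_eq0 => /orP[] /eqP/qnorm_eq0; [left | right].
Qed.

Lemma qsub_eq0 p q : qsub p q = qzero R -> p = q.
Proof. by move=> pq; transitivity (qadd (qsub p q) q); [qring | rewrite pq; qring]. Qed.

Lemma qmulIf q : q <> qzero R -> injective (fun p => qmul p q).
Proof.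
move=> nq p p' pq_p'q; apply: qsub_eq0.
have : qmul (qsub p p') q = qzero R.
  by transitivity (qsub (qmul p q) (qmul p' q)); [qring | rewrite pq_p'q; qring].
by case/qmul_eq0.
Qed.

Lemma qmulVq q : q <> qzero R -> qmul (qinv q) q = qone R.
Proof.
move=> nq; have nq' : qnorm q != 0 by apply/qnorm_eq0P.
have -> : qmul (qinv q) q = qscale (qnorm q)^-1 (qmul (qbar q) q) by qring.
have -> : qmul (qbar q) q = Quat (qnorm q) 0 0 0 by rewrite /qnorm; qring.
by apply: quatP; rewrite /= ?mulr0 ?mulVf.
Qed.

Lemma inV_qstarE w : inV w -> qstar w = w.
Proof. by rewrite /inV => w3; apply: quatP => //=; rewrite w3 oppr0. Qed.

Lemma qstar_inV w : qstar w = w -> inV w.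
Proof. by move/(congr1 (@q3 R)) => /= w3; rewrite /inV; lra. Qed.

Lemma inV_qstar w : inV w -> inV (qstar w).
Proof. by rewrite /inV /= => ->; rewrite oppr0. Qed.

Lemma inV_sub p q : inV p -> inV q -> inV (qsub p q).
Proof. by rewrite /inV /= => -> ->; rewrite oppr0 addr0. Qed.

Lemma inV_conj w q : inV w -> inV (qmul (qstar q) (qmul w q)).
Proof. by case: w => w0 w1 w2 w3; rewrite /inV /= => ->; ring. Qed.

Lemma inV_mul_qbar p c : inV (qmul (qstar c) p) -> inV (qmul p (qbar c)).
Proof.
move/(inV_conj (qbar c)); rewrite /inV.
have -> : q3 (qmul (qstar (qbar c)) (qmul (qmul (qstar c) p) (qbar c)))
          = qnorm c * q3 (qmul p (qbar c)) by rewrite /qnorm /=; ring.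
by move/eqP; rewrite mulf_eq0 => /orP[/eqP/qnorm_eq0 -> | /eqP //]; rewrite /=; ring.
Qed.

End Quaternions.

Section Matrices.
Variable R : realType.
Implicit Types (x y : quat R) (k : quat R * quat R) (A B : qmat R).

Local Notation pzero := (qzero R, qzero R).
Local Notation e1 := (qone R, qzero R).
Local Notation unipotent A :=
  (qmmul (qmsub A (qmat1 R)) (qmsub A (qmat1 R)) = qmat0 R).

Lemma rmulpA k x y : rmulp (rmulp k x) y = rmulp k (qmul x y).
Proof. by rewrite /rmulp /=; congr pair; qring. Qed.

Lemma rmulp_eq0 k y : k <> pzero -> rmulp k y = pzero -> y = qzero R.
Proof.
case: k => u v nk /pair_equal_spec /= [/qmul_eq0 [u0 | //] /qmul_eq0 [v0 | //]].
by case: nk; rewrite u0 v0.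
Qed.

Lemma rmulpIf x : x <> qzero R -> injective (fun k => rmulp k x).
Proof. by move=> nx [u v] [u' v'] /pair_equal_spec /= [/(qmulIf nx) -> /(qmulIf nx) ->]. Qed.

Lemma qmact_rmulp A k x : qmact A (rmulp k x) = rmulp (qmact A k) x.
Proof. by rewrite /qmact /rmulp /=; congr pair; qring. Qed.

Lemma qmact_mmul A B k : qmact (qmmul A B) k = qmact A (qmact B k).
Proof. by rewrite /qmact /=; congr pair; qring. Qed.

Lemma qmact0 k : qmact (qmat0 R) k = pzero.
Proof. by rewrite /qmact /=; congr pair; qring. Qed.

Lemma qmact_sub1 A k :
  qmact (qmsub A (qmat1 R)) k = (qsub (qmact A k).1 k.1, qsub (qmact A k).2 k.2).
Proof. by rewrite /qmact /=; congr pair; qring. Qed.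

Lemma qmact_sub1_eq0 A k : qmact (qmsub A (qmat1 R)) k = pzero -> qmact A k = k.
Proof.
rewrite qmact_sub1 => /pair_equal_spec[/qsub_eq0 Ak1 /qsub_eq0 Ak2].
by rewrite [qmact A k]surjective_pairing Ak1 Ak2; case: k {Ak1 Ak2}.
Qed.

Lemma qpair_eq0_dec k : {k = pzero} + {k <> pzero}.
Proof.
case: k => u v; case: (qnorm_eq0P u) => [-> | nu]; last by right; case.
by case: (qnorm_eq0P v) => [-> | nv]; [left | right; case].
Qed.

Lemma unipotent_eigenvalue A k x :
  unipotent A -> k <> pzero -> qmact A k = rmulp k x -> x = qone R.
Proof.
move=> N2 nk Akx.
have Nk : qmact (qmsub A (qmat1 R)) k = rmulp k (qsub x (qone R)).
  by rewrite qmact_sub1 Akx; case: k {nk Akx} => u v; rewrite /rmulp /=; congr pair; qring.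
have : rmulp k (qmul (qsub x (qone R)) (qsub x (qone R))) = pzero.
  by rewrite -rmulpA -Nk -qmact_rmulp -Nk -qmact_mmul N2 qmact0.
by move/(rmulp_eq0 nk)/qmul_eq0 => [] /qsub_eq0.
Qed.

Lemma SL2V_unipotent_mc_inV A : SL2V A -> unipotent A -> inV (mc A).
Proof.
(* With w = a^* c in V and a^* d - c^* b = 1, the entries (1,1) and (2,1) of N^2 combine to
   c^* - c. *)
case: A => a b c d [_ _ _ _ [_ _ aV_c _ [_ _ _ det4]]] N2; apply: qstar_inV.
pose N := qmsub (QMat a b c d) (qmat1 R); pose w := qmul (qstar a) c.
have -> : qstar c =
  qadd c (qadd (qadd (qmul (qsub w (qstar w)) (qsub a (Quat 2 0 0 0)))
                     (qmul (qsub (qsub (qmul (qstar a) d) (qmul (qstar c) b)) (qone R)) c))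
               (qsub (qmul (qstar c) (ma (qmmul N N))) (qmul (qstar a) (mc (qmmul N N))))).
  by rewrite /w /N; qring.
by rewrite N2 det4 /w (inV_qstarE aV_c) /=; qring.
Qed.

Lemma SL2V_unipotent_fixed_SH A :
  SL2V A -> unipotent A -> exists k, SH k /\ qmact A k = k.
Proof.
move=> slA N2; have cV := SL2V_unipotent_mc_inV slA N2.
case: A slA N2 cV => a b c d [_ _ cV_a _ _] N2 /= cV.
have col1 : qmact (qmsub (QMat a b c d) (qmat1 R)) e1 = (qsub a (qone R), c).
  by rewrite /qmact /=; congr pair; qring.
case: (qpair_eq0_dec (qsub a (qone R), c)) => [col1_0 | col1_n0].
- exists e1; split; last by apply: qmact_sub1_eq0; rewrite col1.
  split; first by move=> /pair_equal_spec[/qone_neq0].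
  by rewrite /inV /=; ring.
- exists (qsub a (qone R), c); split; last first.
    by apply: qmact_sub1_eq0; rewrite -col1 -qmact_mmul N2 qmact0.
  split=> //=; apply: inV_mul_qbar.
  have -> : qmul (qstar c) (qsub a (qone R)) = qsub (qmul (qstar c) a) (qstar c) by qring.
  exact: inV_sub cV_a (inV_qstar cV).
Qed.

Lemma SH_fixed_normal_form A k : SH k -> qmact A k = k ->
  qmact A e1 = e1 \/ exists2 p, inV p & qmact A (p, qone R) = (p, qone R).
Proof.
have fix_rmulp k' x : x <> qzero R -> k = rmulp k' x -> qmact A k = k -> qmact A k' = k'.
  by move=> nx ->; rewrite qmact_rmulp => /(rmulpIf nx).
case: k fix_rmulp => xi eta fix_rmulp [nk /= V_k] Ak.
case: (qnorm_eq0P eta) => [eta0 | neta].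
- left; apply: (fix_rmulp _ xi) Ak => [xi0 | ]; first by apply: nk; rewrite xi0 eta0.
  by rewrite eta0 /rmulp /=; congr pair; qring.
- right; exists (qmul xi (qinv eta)).
    have -> : qmul xi (qinv eta) = qscale (qnorm eta)^-1 (qmul xi (qbar eta)) by qring.
    by move: V_k; rewrite /inV /= => ->; rewrite mulr0.
  apply: (fix_rmulp _ eta neta) Ak.
  by rewrite /rmulp /= qmulA qmulVq // qmulq1 qmul1q.
Qed.

Lemma SL2V_fixed_e1_unipotent A : SL2V A -> qmact A e1 = e1 -> unipotent A.
Proof.
case: A => a b c d [_ _ _ _ [_ _ _ _ [_ _ det3 _]]].
rewrite /qmact /= => /pair_equal_spec[fix1 fix2].
have a1 : a = qone R by rewrite -fix1; qring.
have c0 : c = qzero R by rewrite -fix2; qring.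
subst a c.
have d1 : d = qone R.
  have <- : qstar (qsub (qmul (qstar d) (qone R)) (qmul (qstar b) (qzero R))) = d by qring.
  by rewrite det3; qring.
by subst d; apply: qmatP; qring.
Qed.

Lemma SL2V_fixed_Vpoint_unipotent A p :
  SL2V A -> inV p -> qmact A (p, qone R) = (p, qone R) -> unipotent A.
Proof.
case: A => a b c d [_ _ _ _ [_ _ aV_c _ [_ _ det3 _]]] pV.
rewrite /qmact /= => /pair_equal_spec[fix1 fix2].
have b_eq : b = qsub p (qmul a p).
  by transitivity (qsub (qadd (qmul a p) (qmul b (qone R))) (qmul a p)); [qring | rewrite fix1].
have d_eq : d = qsub (qone R) (qmul c p).
  by transitivity (qsub (qadd (qmul c p) (qmul d (qone R))) (qmul c p)); [qring | rewrite fix2].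
subst b d; pose w := qmul (qstar a) c.
have a_eq : a = qadd (qone R) (qmul p c).
  transitivity (qadd (qadd (qone R) (qmul (qstar p) c))
    (qadd (qsub (qsub (qmul (qstar (qsub (qone R) (qmul c p))) a)
                      (qmul (qstar (qsub p (qmul a p))) c)) (qone R))
          (qmul (qstar p) (qsub (qstar w) w)))); first by rewrite /w; qring.
  by rewrite det3 /w (inV_qstarE aV_c) (inV_qstarE pV); qring.
by subst a; apply: qmatP; qring.
Qed.

Lemma SL2V_fixed_SH_unipotent A k : SL2V A -> SH k -> qmact A k = k -> unipotent A.
Proof.
move=> slA SHk /(SH_fixed_normal_form SHk) [/(SL2V_fixed_e1_unipotent slA) // | [p pV]].
exact: SL2V_fixed_Vpoint_unipotent.
Qed.

End Matrices.

Theorem lemma3p26 (R : realType) (A : qmat R) :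
  SL2V A ->
  (parabolic A ->
     forall (k : quat R * quat R) (x : quat R),
       SH k -> qmact A k = rmulp k x -> x = qone R) /\
  (parabolic A <->
     (A <> qmat1 R /\ exists k : quat R * quat R, SH k /\ qmact A k = k)).
Proof.
move=> slA; split.
  by case=> _ [_ N2] k x [nk _]; apply: unipotent_eigenvalue.
split.
  by case=> _ [A1 N2]; split; last exact: SL2V_unipotent_fixed_SH.
by case=> A1 [k [SHk Ak]]; split=> //; split=> //; exact: SL2V_fixed_SH_unipotent SHk Ak.
Qed.
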